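(* Let $\Phi_p\in\mathbb{R}^{n\times d}$ be fixed with $\hat\Sigma:=\tfrac1n\Phi_p^\top\Phi_p=\mathrm{diag}(\sigma_1^2,\dots,\sigma_d^2)$, all $\sigma_j^2>0$. Suppose $Y_p=\Phi_p\beta_0+\epsilon$ with $\beta_0\in\mathbb{R}^d$ and $\epsilon\in\mathbb{R}^n$ having i.i.d. entries of mean $0$ and variance $\sigma^2$. Let $\mu\in\mathbb{R}^{1\times d}$ be a fixed target mean vector (the population target feature mean $\mathbb{E}[\Phi_q]$), let $\lambda,\delta\ge0$, let $\hat\beta^\lambda:=(\hat\Sigma+\lambda I)^{-1}\Phi_p^\top Y_p/n$, let $\hat v:=\mu(\hat\Sigma+\delta I)^{-1}\Phi_p^\top/n$, and consider the augmented estimator $\hat\psi:=\mu\hat\beta^\lambda+\hat v(Y_p-\Phi_p\hat\beta^\lambda)$ of $\mu\beta_0$. Let $\Gamma_{\lambda,\delta}:=\mathrm{diag}(\gamma_1,\dots,\gamma_d)$ with $\gamma_j:=\frac{\delta\lambda}{\sigma_j^2+\delta+\lambda}$ (and $\gamma_j:=0$ if $\delta=\lambda=0$). Then, with expectation and variance taken over $\epsilon$, $$\big(\mathbb{E}[\hat\psi]-\mu\beta_0\big)^2=\beta_0^\top(\hat\Sigma+\Gamma_{\lambda,\delta})^{-1}\Gamma_{\lambda,\delta}\,\mu^\top\mu\,\Gamma_{\lambda,\delta}(\hat\Sigma+\Gamma_{\lambda,\delta})^{-1}\beta_0,$$ $$\mathrm{Var}(\hat\psi)=\frac{\sigma^2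}{n}\,\mathrm{tr}\!\left[\hat\Sigma(\hat\Sigma+\Gamma_{\lambda,\delta})^{-1}\mu^\top\mu(\hat\Sigma+\Gamma_{\lambda,\delta})^{-1}\right].$$
   Context: This is a design-conditional analysis: $\Phi_p$ and the target mean $\mu$ are treated as fixed; only the noise $\epsilon$ is random. The hyperparameters are on the rescaled scale where ridge regression is $(\hat\Sigma+\lambda I)^{-1}\Phi_p^\top Y_p/n$. *)

From HB Require Import structures.
From mathcomp Require Import all_boot all_order all_algebra.
From mathcomp Require Import all_classical all_reals all_analysis.
Set Implicit Arguments. Unset Strict Implicit. Unset Printing Implicit Defensive.
Import Order.TTheory GRing.Theory Num.Theory.
Import numFieldNormedType.Exports.
Local Open Scope classical_set_scope.
Local Open Scope ring_scope.

Definition mutually_independent d (T : measurableType d) (R : realType)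
  (P : probability T R) (n : nat) (X : 'I_n -> {RV P >-> R}) : Prop :=
  forall (J : {set 'I_n}) (B : 'I_n -> set R),
    (forall i, measurable (B i)) ->
    P [set w | forall i, i \in J -> B i (X i w)] =
    (\prod_(i in J) P (X i @^-1` B i))%E.

Definition identically_distributed d (T : measurableType d) (R : realType)
  (P : probability T R) (n : nat) (X : 'I_n -> {RV P >-> R}) : Prop :=
  forall i j, distribution P (X i) = distribution P (X j).

Definition Sigma_hat (R : realType) (n d : nat) (Phi : 'M[R]_(n, d)) : 'M[R]_d :=
  n%:R^-1 *: (Phi^T *m Phi).

Definition eps_vec d0 (T : measurableType d0) (R : realType) (P : probability T R)
  (n : nat) (eps : 'I_n -> {RV P >-> R}) (w : T) : 'cV[R]_n :=
  \col_i eps i w.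

Definition Y_p d0 (T : measurableType d0) (R : realType) (P : probability T R)
  (n d : nat) (Phi : 'M[R]_(n, d)) (beta0 : 'cV[R]_d)
  (eps : 'I_n -> {RV P >-> R}) (w : T) : 'cV[R]_n :=
  Phi *m beta0 + eps_vec eps w.

Definition beta_ridge (R : realType) (n d : nat) (Phi : 'M[R]_(n, d))
  (lambda : R) (Y : 'cV[R]_n) : 'cV[R]_d :=
  n%:R^-1 *: (invmx (Sigma_hat Phi + lambda%:M) *m Phi^T *m Y).

Definition v_hat (R : realType) (n d : nat) (Phi : 'M[R]_(n, d))
  (mu : 'rV[R]_d) (delta : R) : 'rV[R]_n :=
  n%:R^-1 *: (mu *m invmx (Sigma_hat Phi + delta%:M) *m Phi^T).

Definition psi_hat d0 (T : measurableType d0) (R : realType) (P : probability T R)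
  (n d : nat) (Phi : 'M[R]_(n, d)) (beta0 : 'cV[R]_d) (mu : 'rV[R]_d)
  (lambda delta : R) (eps : 'I_n -> {RV P >-> R}) (w : T) : R :=
  let Y := Y_p Phi beta0 eps w in
  let b := beta_ridge Phi lambda Y in
  (mu *m b + v_hat Phi mu delta *m (Y - Phi *m b)) 0 0.

Definition Gamma_ld (R : realType) (d : nat) (s : 'rV[R]_d) (lambda delta : R)
  : 'M[R]_d :=
  diag_mx (\row_j (if (delta == 0) && (lambda == 0) then 0
                   else delta * lambda / (s 0 j + delta + lambda))).

(** The estimator psi_hat is an affine function of the noise vector:
      psi_hat = mu K Sigma_hat beta0 + (mu K Phi^T / n) eps,
    where K = (Sigma_hat + lambda)^-1 + (Sigma_hat + delta)^-1
              - (Sigma_hat + delta)^-1 Sigma_hat (Sigma_hat + lambda)^-1.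
    When Sigma_hat = diag(s) the matrix K is diagonal, and entrywise the
    resolvent identity  1/(s+l) + 1/(s+e) - s/((s+e)(s+l)) = 1/(s+g)  with
    g = e l/(s+e+l) shows K = (Sigma_hat + Gamma)^-1. *)

From HB Require Import structures.
From mathcomp Require Import all_boot all_order all_algebra.
From mathcomp Require Import all_classical all_reals all_analysis.
From mathcomp Require Import measurable_realfun ring.
Set Implicit Arguments. Unset Strict Implicit. Unset Printing Implicit Defensive.
Import Order.TTheory GRing.Theory Num.Theory.
Import numFieldNormedType.Exports.

Local Open Scope ring_scope.
Local Open Scope classical_set_scope.

Section Independence.
Context dT (T : measurableType dT) (R : realType) (P : probability T R).
Local Open Scope ereal_scope.

(** The
    joint law agrees with the product measure of the marginals (uniqueness
    of product measures), and Fubini splits the integral of x y. *)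
Lemma expectationM_indep (X Y : {RV P >-> R}) :
  (X : T -> R) \in Lfun P 2%:E -> (Y : T -> R) \in Lfun P 2%:E ->
  (forall A B, measurable A -> measurable B ->
     P (X @^-1` A `&` Y @^-1` B) = P (X @^-1` A) * P (Y @^-1` B)) ->
  'E_P[(X : T -> R) \* Y] = 'E_P[X] * 'E_P[Y].
Proof.
move=> X2 Y2 XY.
have X1 : (X : T -> R) \in Lfun P 1 by rewrite Lfun_subset12 ?fin_num_measure.
have Y1 : (Y : T -> R) \in Lfun P 1 by rewrite Lfun_subset12 ?fin_num_measure.
pose Z w := (X w, Y w).
have mZ : measurable_fun setT Z by exact: measurable_fun_pair.
pose Q := pushforward P Z.
pose mX := distribution P X.
pose mY := distribution P Y.
have joint_law : forall S, measurable S -> (mX \x mY) S = Q S.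
  apply: product_measure_unique => A B mA mB.
  by rewrite /pushforward /distribution /pushforward -XY.
pose f (z : R * R) := (z.1 * z.2)%R%:E.
have mf : measurable_fun [set: (R * R)%type] f.
  by apply/measurable_EFinP; apply: measurable_funM.
have iPZ : P.-integrable (Z @^-1` setT) (f \o Z).
  by rewrite preimage_setT; exact/Lfun1_integrable/Lfun2_mul_Lfun1.
have iQ : Q.-integrable setT f by exact: integrable_pushforward.
have iXY : (mX \x mY).-integrable setT f.
  apply/integrableP; split => //.
  move/integrableP : iQ => [_]; apply: le_lt_trans.
  by rewrite (eq_measure_integral Q) // => A mA _; exact: joint_law.
have law_mean (V : {RV P >-> R}) : (V : T -> R) \in Lfun P 1 ->
    (distribution P V).-integrable setT EFin /\
    \int[distribution P V]_y y%:E = 'E_P[V].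
  move=> V1; have iV : P.-integrable (V @^-1` setT) (EFin \o V).
    by rewrite preimage_setT; exact/Lfun1_integrable.
  split; first exact: integrable_pushforward.
  by rewrite integral_pushforward // preimage_setT unlock.
have [iY EYE] := law_mean Y Y1.
have [iX EXE] := law_mean X X1.
have EYfin : 'E_P[Y] = (fine 'E_P[Y])%:E by rewrite fineK // expectation_fin_num.
transitivity (\int[P]_(w in Z @^-1` setT) (f \o Z) w).
  by rewrite preimage_setT unlock.
rewrite -(integral_pushforward mZ) //.
rewrite -(eq_measure_integral _ (fun A mA _ => joint_law A mA)).
rewrite -integral12_prod_meas1 //.
transitivity (\int[mX]_x (x%:E * 'E_P[Y])).
  by apply: eq_integral => x _; rewrite /fubini_F -EYE -integralZl.
by rewrite EYfin integralZr // EXE.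
(* the measure structure on the joint law Q is built from mZ *)
Unshelve. exact: mZ.
Qed.

(** Mutual independence of a family implies independence of any two
    distinct members: take the sub-family {i, j} with full sets elsewhere. *)
Lemma mutually_independent_pair n (X : 'I_n -> {RV P >-> R}) :
  mutually_independent X -> forall i j, i != j ->
  forall A B, measurable A -> measurable B ->
  P (X i @^-1` A `&` X j @^-1` B) = P (X i @^-1` A) * P (X j @^-1` B).
Proof.
move=> indep i j ij A B mA mB.
pose Bf k := if k == i then A else if k == j then B else setT.
have mBf k : measurable (Bf k) by rewrite /Bf; case: ifP => _ //; case: ifP.
have := indep [set i; j]%SET Bf mBf.
rewrite big_setU1 /=; last by rewrite !inE.
rewrite big_set1 /Bf eqxx eq_sym (negbTE ij) eqxx => <-.
congr (P _); apply/seteqP; split => w /=.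
- move=> [Ai Bj] k; rewrite !inE => /orP[]/eqP->; first by rewrite eqxx.
  by rewrite eq_sym (negbTE ij) eqxx.
- move=> H; split; first by have := H i; rewrite !inE eqxx /=; apply.
  by have := H j; rewrite !inE eqxx orbT eq_sym (negbTE ij); apply.
Qed.

Lemma independent_noise_white n (e : 'I_n -> {RV P >-> R}) (sigma : R) :
  mutually_independent e ->
  (forall i, (e i : T -> R) \in Lfun P 2%:E) ->
  (forall i, 'E_P[e i] = 0) ->
  (forall i, 'V_P[e i] = (sigma ^+ 2)%:E) ->
  forall i j, 'E_P[(e i : T -> R) \* e j] = (if i == j then sigma ^+ 2 else 0)%:E.
Proof.
move=> indep e2 e0 eV i j; case: eqVneq => [<-|ij].
  have := eV i; rewrite /variance unlock e0 /= => <-.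
  congr expectation; apply/funext => w.
  by change (e i w * e i w = (e i w - 0) * (e i w - 0))%R; rewrite subr0.
rewrite expectationM_indep ?e2 //; last exact: mutually_independent_pair.
by rewrite !e0 mule0.
Qed.

End Independence.

Section AffineStatistic.
Context dT (T : measurableType dT) (R : realType) (P : probability T R).
Context (n : nat) (e : 'I_n -> T -> R) (sigma : R).
Local Open Scope ereal_scope.

Hypothesis e_L2 : forall i, e i \in Lfun P 2%:E.
Hypothesis e_centered : forall i, 'E_P[e i] = 0.
Hypothesis e_white :
  forall i j, 'E_P[e i \* e j] = (if i == j then sigma ^+ 2 else 0)%:E.

Definition affine_stat (c : R) (a : 'rV[R]_n) : T -> R :=
  fun w => (c + \sum_(i < n) a 0 i * e i w)%R.

Let e_L1 i : e i \in Lfun P 1.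
Proof. by rewrite Lfun_subset12 ?fin_num_measure. Qed.

Let expectation_sum_ord (F : 'I_n -> T -> R) : (forall i, F i \in Lfun P 1) ->
  'E_P[fun w => (\sum_(i < n) F i w)%R] = \sum_(i < n) 'E_P[F i].
Proof.
move=> F1; rewrite -fct_sumE -(big_map F xpredT id) expectation_sum ?big_map //.
by move=> _ /mapP[i _ ->].
Qed.

Let expectation_scale (k : R) (f : T -> R) : f \in Lfun P 1 ->
  'E_P[fun w => (k * f w)%R] = k%:E * 'E_P[f].
Proof.
move=> f1; rewrite -expectationZl //.
by congr expectation; apply/funext => w; rewrite /= mulrC.
Qed.

Let scale_L1 (k : R) (f : T -> R) : f \in Lfun P 1 ->
  (fun w => (k * f w)%R) \in Lfun P 1.
Proof.
move=> f1; suff -> : (fun w => (k * f w)%R) = k \o* f by exact: Lfun_scale.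
by apply/funext => w; rewrite /= mulrC.
Qed.

Lemma expectation_affine_stat c a : 'E_P[affine_stat c a] = c%:E.
Proof.
have sum_L1 : (fun w => \sum_(i < n) a 0 i * e i w)%R \in Lfun P 1.
  by rewrite -fct_sumE; apply: rpred_sum => i _; exact: scale_L1.
rewrite /affine_stat -[X in 'E_P[X]]/(cst c \+ _)%R.
rewrite expectationD ?Lfun_cst // expectation_cst.
rewrite expectation_sum_ord; last by move=> i; exact: scale_L1.
by rewrite big1 ?adde0 // => i _; rewrite expectation_scale // e_centered mule0.
Qed.

(** Var[c + a.e] = sigma^2 |a|^2: expanding the square, the cross terms
    vanish by whiteness. *)
Lemma variance_affine_stat c a :
  'V_P[affine_stat c a] = (sigma ^+ 2 * (a *m a^T) 0 0)%:E.
Proof.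
rewrite /variance unlock expectation_affine_stat /=.
have -> : ((affine_stat c a \- cst c) * (affine_stat c a \- cst c))%R =
    (fun w => \sum_(i < n) \sum_(j < n) (a 0 i * a 0 j) * (e i w * e j w))%R.
  apply/funext => w; rewrite mulrfctE /affine_stat /= addrC addKr mulr_suml.
  apply: eq_bigr => i _; rewrite mulr_sumr; apply: eq_bigr => j _.
  by rewrite mulrACA.
have ee_L1 i j : (e i \* e j)%R \in Lfun P 1 by exact: Lfun2_mul_Lfun1.
have term_L1 i j := scale_L1 (a 0 i * a 0 j)%R (ee_L1 i j).
rewrite expectation_sum_ord; last first.
  by move=> i; rewrite -fct_sumE; apply: rpred_sum => j _; exact: term_L1.
under eq_bigr => i _ do rewrite (@expectation_sum_ord _ (term_L1 i)).
under eq_bigr => i _ do under eq_bigr => j _ do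
  rewrite (expectation_scale _ (ee_L1 i j)) e_white -EFinM.
have diag_sum i : (\sum_(j < n)
    a 0 i * a 0 j * (if i == j then sigma ^+ 2 else 0) = a 0 i * a 0 i * sigma ^+ 2)%R.
  rewrite (bigD1 i) //= eqxx big1 ?addr0 // => j.
  by rewrite eq_sym => /negbTE ->; rewrite mulr0.
under eq_bigr => i _ do rewrite sumEFin diag_sum.
rewrite sumEFin mxE -mulr_suml mulrC; congr (_ * _)%:E.
by apply: eq_bigr => i _; rewrite mxE.
Qed.

End AffineStatistic.

(** The matrix through which the augmented estimator acts on Phi^T Y / n:
    K = (S + lambda)^-1 + (S + delta)^-1 - (S + delta)^-1 S (S + lambda)^-1. *)
Definition augmented_mx (R : realType) (n d : nat) (Phi : 'M[R]_(n, d))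
  (lambda delta : R) : 'M[R]_d :=
  let Al := invmx (Sigma_hat Phi + lambda%:M) in
  let Ad := invmx (Sigma_hat Phi + delta%:M) in
  Al + Ad - Ad *m Sigma_hat Phi *m Al.

Lemma psi_hat_linear (R : realType) (n d : nat) (Phi : 'M[R]_(n, d))
  (mu : 'rV[R]_d) (lambda delta : R) (Y : 'cV[R]_n) :
  mu *m beta_ridge Phi lambda Y
    + v_hat Phi mu delta *m (Y - Phi *m beta_ridge Phi lambda Y)
  = mu *m augmented_mx Phi lambda delta *m (n%:R^-1 *: (Phi^T *m Y)).
Proof.
rewrite /beta_ridge /v_hat /augmented_mx.
set Al := invmx _; set Ad := invmx _; set k := n%:R^-1.
have -> : k *: (Al *m Phi^T *m Y) = Al *m (k *: (Phi^T *m Y)).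
  by rewrite -mulmxA scalemxAr.
set z := k *: (Phi^T *m Y).
rewrite mulmxBr [X in _ - X]mulmxA.
have -> : k *: (mu *m Ad *m Phi^T) *m Phi = mu *m Ad *m Sigma_hat Phi.
  by rewrite /Sigma_hat -scalemxAl -!mulmxA !scalemxAr.
have -> : k *: (mu *m Ad *m Phi^T) *m Y = mu *m Ad *m z.
  by rewrite /z -scalemxAl -!mulmxA !scalemxAr.
by rewrite !(mulmxDr, mulmxDl, mulmxN, mulNmx, mulmxA) addrA.
Qed.

Lemma psi_hat_affine dT (T : measurableType dT) (R : realType)
  (P : probability T R) (n d : nat) (Phi : 'M[R]_(n, d)) (beta0 : 'cV[R]_d)
  (mu : 'rV[R]_d) (lambda delta : R) (eps : 'I_n -> {RV P >-> R}) :
  let K := augmented_mx Phi lambda delta in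
  psi_hat Phi beta0 mu lambda delta eps
  = affine_stat (fun i => eps i : T -> R) ((mu *m K *m Sigma_hat Phi *m beta0) 0 0)
      (n%:R^-1 *: (mu *m K *m Phi^T)).
Proof.
move=> K; apply/funext => w.
rewrite /psi_hat psi_hat_linear /Y_p mulmxDr scalerDr mulmxDr mxE.
rewrite /affine_stat; congr (_ + _).
  by rewrite [Phi^T *m _]mulmxA scalemxAl mulmxA.
rewrite -scalemxAr !mulmxA scalemxAl [LHS]mxE.
by apply: eq_bigr => i _; rewrite /eps_vec !mxE.
Qed.

Definition gamma_entry (R : realFieldType) (s lambda delta : R) : R :=
  if (delta == 0) && (lambda == 0) then 0 else delta * lambda / (s + delta + lambda).

Lemma Gamma_ldE (R : realType) d (s : 'rV[R]_d) (lambda delta : R) :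
  Gamma_ld s lambda delta = diag_mx (\row_j gamma_entry (s 0 j) lambda delta).
Proof. by []. Qed.

Lemma gamma_entry_ge0 (R : realFieldType) (s lambda delta : R) :
  0 < s -> 0 <= lambda -> 0 <= delta -> 0 <= gamma_entry s lambda delta.
Proof.
move=> s0 l0 e0; rewrite /gamma_entry; case: ifP => // _.
by rewrite divr_ge0 ?mulr_ge0 // !addr_ge0 // ltW.
Qed.

(** Scalar resolvent identity: for s > 0,
    1/(s+l) + 1/(s+e) - s/((s+e)(s+l)) = 1/(s + e l/(s+e+l)),
    using (s+e)(s+l) = (s+e+l)(s + e l/(s+e+l)). *)
Lemma resolvent_entry (R : realFieldType) (s lambda delta : R) :
  0 < s -> 0 <= lambda -> 0 <= delta ->
  (s + lambda)^-1 + (s + delta)^-1 - (s + delta)^-1 * s * (s + lambda)^-1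
  = (s + gamma_entry s lambda delta)^-1.
Proof.
move=> s0 l0 e0.
have sl : s + lambda != 0 by rewrite gt_eqF // ltr_wpDr.
have se : s + delta != 0 by rewrite gt_eqF // ltr_wpDr.
rewrite /gamma_entry; case: ifP => [/andP[/eqP -> /eqP ->]|_].
  by rewrite !addr0; field; rewrite gt_eqF.
have sel : s + delta + lambda != 0 by rewrite gt_eqF // -addrA ltr_wpDr // addr_ge0.
have -> : s + delta * lambda / (s + delta + lambda)
          = (s + delta) * (s + lambda) / (s + delta + lambda) by field.
by field; rewrite sl se sel.
Qed.

Lemma invmx_diag (R : fieldType) d (r : 'rV[R]_d) : (forall j, r 0 j != 0) ->
  invmx (diag_mx r) = diag_mx (\row_j (r 0 j)^-1).
Proof.
move=> r0.
have rinv : diag_mx r *m diag_mx (\row_j (r 0 j)^-1) = 1%:M.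
  rewrite mulmx_diag -diag_const_mx; congr diag_mx; apply/rowP => j.
  by rewrite !mxE mulfV.
have [r_unit _] := mulmx1_unit rinv.
by rewrite -[RHS]mul1mx -(mulVmx r_unit) -mulmxA rinv mulmx1.
Qed.

Lemma diag_mx_shift (R : pzRingType) d (s : 'rV[R]_d) (c : R) :
  diag_mx s + c%:M = diag_mx (\row_j (s 0 j + c)).
Proof.
rewrite -diag_const_mx -raddfD; congr diag_mx; apply/rowP => j; by rewrite !mxE.
Qed.

Section DiagonalDesign.
Variables (R : realType) (d : nat) (s : 'rV[R]_d) (lambda delta : R).
Hypotheses (s_pos : forall j, 0 < s 0 j) (l_ge0 : 0 <= lambda) (e_ge0 : 0 <= delta).

Let g j := gamma_entry (s 0 j) lambda delta.

Lemma inv_diag_add_Gamma :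
  invmx (diag_mx s + Gamma_ld s lambda delta) = diag_mx (\row_j (s 0 j + g j)^-1).
Proof.
rewrite Gamma_ldE -raddfD invmx_diag => [|j]; last first.
  by rewrite !mxE gt_eqF // ltr_wpDr // gamma_entry_ge0.
by congr diag_mx; apply/rowP => j; rewrite !mxE.
Qed.

Lemma diag_add_Gamma_unit : diag_mx s + Gamma_ld s lambda delta \in unitmx.
Proof.
rewrite Gamma_ldE -raddfD unitmxE det_diag unitfE prodf_seq_neq0.
by apply/allP => j _; rewrite !mxE gt_eqF // ltr_wpDr // gamma_entry_ge0.
Qed.

Lemma inv_diag_add_Gamma_facts :
  let G := Gamma_ld s lambda delta in let M := invmx (diag_mx s + G) in
  [/\ M *m (diag_mx s + G) = 1%:M, M^T = M, G^T = G & M *m G = G *m M].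
Proof.
move=> G M; split.
- exact: mulVmx diag_add_Gamma_unit.
- by rewrite /M inv_diag_add_Gamma tr_diag_mx.
- by rewrite /G Gamma_ldE tr_diag_mx.
- by rewrite /M inv_diag_add_Gamma /G Gamma_ldE diag_mx_comm.
Qed.

(** For a diagonal design the augmented estimator's matrix is
    K = (Sigma_hat + Gamma)^-1, by the scalar resolvent identity. *)
Lemma augmented_mx_diag (n : nat) (Phi : 'M[R]_(n, d)) :
  Sigma_hat Phi = diag_mx s ->
  augmented_mx Phi lambda delta = invmx (Sigma_hat Phi + Gamma_ld s lambda delta).
Proof.
move=> SigE; rewrite /augmented_mx SigE inv_diag_add_Gamma !diag_mx_shift.
rewrite !invmx_diag => [|j|j]; rewrite ?mxE ?gt_eqF ?ltr_wpDr //.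
rewrite !mulmx_diag -raddfD -raddfB; congr diag_mx; apply/rowP => j.
by rewrite !mxE resolvent_entry.
Qed.

End DiagonalDesign.

(** Squared bias as a quadratic form.  If M (S + G) = 1 with M, G symmetric
    and commuting, then mu M S beta - mu beta = - mu G M beta, whose square is
    beta^T M G mu^T mu G M beta. *)
Lemma bias_square (R : comPzRingType) d (S G M : 'M[R]_d) (mu : 'rV[R]_d)
  (beta : 'cV[R]_d) :
  M *m (S + G) = 1%:M -> M^T = M -> G^T = G -> M *m G = G *m M ->
  let b := (mu *m M *m S *m beta) 0 0 - (mu *m beta) 0 0 in
  b * b = (beta^T *m M *m G *m mu^T *m mu *m G *m M *m beta) 0 0.
Proof.
move=> Minv MT GT MG b.
have MS : M *m S = 1%:M - M *m G by rewrite -Minv mulmxDr addrK.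
have bE : b = - (mu *m G *m M *m beta) 0 0.
  rewrite /b -(mulmxA mu M S) MS mulmxBr mulmx1 MG mulmxA mulmxBl.
  by rewrite [X in X - _]mxE [X in _ + X - _]mxE addrAC subrr add0r.
have transposeE : beta^T *m M *m G *m mu^T = (mu *m G *m M *m beta)^T.
  by rewrite !trmx_mul MT GT !mulmxA.
have -> : beta^T *m M *m G *m mu^T *m mu *m G *m M *m beta
    = (beta^T *m M *m G *m mu^T) *m (mu *m G *m M *m beta) by rewrite !mulmxA.
by rewrite bE mulrNN transposeE [RHS]mxE big_ord1 [X in _ = X * _]mxE.
Qed.

Lemma weights_norm_trace (R : realType) (n d : nat) (Phi : 'M[R]_(n, d))
  (M : 'M[R]_d) (mu : 'rV[R]_d) :
  M^T = M ->
  let a := n%:R^-1 *: (mu *m M *m Phi^T) in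
  (a *m a^T) 0 0 = n%:R^-1 * \tr (Sigma_hat Phi *m M *m mu^T *m mu *m M).
Proof.
move=> MT a.
rewrite -(mulmxA (Sigma_hat Phi *m M *m mu^T)) mxtrace_mulC trace_mx11.
rewrite /a /Sigma_hat linearZ /= !trmx_mul MT trmxK -!scalemxAl -!scalemxAr !mulmxA.
by rewrite [LHS]mxE.
Qed.

Theorem mainTheorem9 (dT : measure_display) (T : measurableType dT)
  (R : realType) (P : probability T R) (n d : nat)
  (Phi : 'M[R]_(n, d)) (s : 'rV[R]_d) (beta0 : 'cV[R]_d) (mu : 'rV[R]_d)
  (sigma lambda delta : R) (eps : 'I_n -> {RV P >-> R}) :
  Sigma_hat Phi = diag_mx s ->
  (forall j, 0 < s 0 j) ->
  mutually_independent eps ->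
  identically_distributed eps ->
  (forall i, (eps i : T -> R) \in Lfun P 2%:E) ->
  (forall i, ('E_P[eps i] = 0)%E) ->
  (forall i, ('V_P[eps i] = (sigma ^+ 2)%:E)%E) ->
  0 <= lambda -> 0 <= delta ->
  let psi := psi_hat Phi beta0 mu lambda delta eps in
  let G := Gamma_ld s lambda delta in
  let Sig := Sigma_hat Phi in
  (('E_P[psi] - ((mu *m beta0) 0 0)%:E) * ('E_P[psi] - ((mu *m beta0) 0 0)%:E)
     = ((beta0^T *m invmx (Sig + G) *m G *m mu^T *m mu *m G
          *m invmx (Sig + G) *m beta0) 0 0)%:E)%E /\
  ('V_P[psi] = (sigma ^+ 2 / n%:R
                 * \tr (Sig *m invmx (Sig + G) *m mu^T *m mu *m invmx (Sig + G)))%:E)%E.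
Proof.
move=> SigE s_pos indep _ eps_L2 eps_mean0 eps_var l_ge0 d_ge0 psi G Sig.
have white := independent_noise_white indep eps_L2 eps_mean0 eps_var.
have psiE : psi = affine_stat (fun i => eps i : T -> R)
    ((mu *m invmx (Sig + G) *m Sig *m beta0) 0 0)
    (n%:R^-1 *: (mu *m invmx (Sig + G) *m Phi^T)).
  by rewrite /psi psi_hat_affine (augmented_mx_diag s_pos l_ge0 d_ge0 SigE).
have [Minv MT GT MG] := inv_diag_add_Gamma_facts s_pos l_ge0 d_ge0.
rewrite -/G -SigE in Minv MT MG.
split.
- rewrite psiE expectation_affine_stat // -EFinB -EFinM; congr EFin.
  exact: bias_square.
- rewrite psiE (variance_affine_stat eps_L2 eps_mean0 white) weights_norm_trace //.
  by rewrite mulrA.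
Qed.
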